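(* Let $H=(L\uplus R,E_H)$ be a bipartite graph and $\alpha>1$ a real number such that $|N_H(A)|\ge\alpha|A|$ for every $A\subseteq L$. Let $F\subseteq E_H$ be a matching in which not all vertices of $L$ are matched. Then there is an augmenting path with respect to $F$ of length at most $2D+1$, where $D=\lfloor\log_\alpha|L|\rfloor+1$.
   Context: $N_H(A)$ denotes the set of vertices adjacent in $H$ to some vertex of $A$. An augmenting path with respect to a matching $F$ is a path starting at an unmatched vertex of $L$, ending at an unmatched vertex of $R$, whose edges alternate between edges not in $F$ and edges in $F$. *)

From HB Require Import structures.
From mathcomp Require Import all_boot all_order all_algebra.
From mathcomp Require Import all_classical all_reals all_analysis.
Set Implicit Arguments. Unset Strict Implicit. Unset Printing Implicit Defensive.
Import Order.TTheory GRing.Theory Num.Theory.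
Local Open Scope ring_scope.

Definition nbhd (L R : finType) (adj : L -> R -> bool) (A : {set L}) : {set R} :=
  [set r | [exists l in A, adj l r]].

Definition is_matching (L R : finType) (adj : L -> R -> bool) (F : {set L * R}) :=
  (forall e, e \in F -> adj e.1 e.2) /\
  (forall e e', e \in F -> e' \in F -> (e.1 = e'.1 \/ e.2 = e'.2) -> e = e').

Definition matchedL (L R : finType) (F : {set L * R}) (l : L) :=
  [exists r, (l, r) \in F].
Definition matchedR (L R : finType) (F : {set L * R}) (r : R) :=
  [exists l, (l, r) \in F].

(* An alternating path l_0 r_0 l_1 r_1 ... l_k r_k is encoded as the
   nonempty sequence p = [:: (l_0,r_0); ...; (l_k,r_k)] of its non-matching
   edges; the matching edges are (l_{i+1}, r_i). Its length (number of edges)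
   is 2(k+1) - 1. *)
Definition augmenting_path (L R : finType) (adj : L -> R -> bool)
    (F : {set L * R}) (p : seq (L * R)) : Prop :=
  match p with
  | [::] => False
  | e0 :: _ =>
    [/\ uniq (map fst p) /\ uniq (map snd p),
        all (fun e => adj e.1 e.2 && (e \notin F)) p,
        sorted (fun e e' => (e'.1, e.2) \in F) p,
        ~~ matchedL F e0.1 &
        ~~ matchedR F (last e0 p).2]
  end.

Definition path_length (L R : Type) (p : seq (L * R)) : nat := (2 * size p).-1.

From HB Require Import structures.
From mathcomp Require Import all_boot all_order all_algebra.
From mathcomp Require Import all_classical all_reals all_analysis.
From mathcomp Require Import zify.
Import Order.TTheory GRing.Theory Num.Theory.

(** Grow a "Hungarian tree" from an unmatched vertex [l0]: [A_0 = {l0}] and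
  [A_(k+1)] adds to [A_k] the partners of the vertices of [N(A_k)].  Every
  vertex of [A_k] is the end of an alternating path from an unmatched vertex
  with at most [k] non-matching edges, so an unmatched vertex of [N(A_k)]
  yields an augmenting path with at most [k+1] of them.  Otherwise all of
  [N(A_k)] is matched, its partners are distinct and different from [l0], and
  [|A_(k+1)| > |N(A_k)| >= alpha |A_k|].  Hence [|A_k| >= alpha^k], which
  cannot hold for [k = D] since [alpha^D > |L|]. *)

Lemma mem_belast_split (T : eqType) (x0 y : T) (s : seq T) :
  y \in belast x0 s -> exists s1 x s2, s = s1 ++ x :: s2 /\ y = last x0 s1.
Proof.
elim: s x0 => [|x s IH] x0 //=; rewrite inE => /orP[/eqP->|/IH].
  by exists [::], x, s.
by case=> [s1 [z [s2 [-> ->]]]]; exists (x :: s1), z, s2.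
Qed.

Section AlternatingPaths.
Set Implicit Arguments. Unset Strict Implicit.

Variables (L R : finType) (adj : L -> R -> bool) (F : {set L * R}).
Hypothesis matchingF : is_matching adj F.

Lemma matching_eq_fst l l' r : (l, r) \in F -> (l', r) \in F -> l = l'.
Proof. by move=> h h'; case: (matchingF.2 _ _ h h' (or_intror erefl)). Qed.

Lemma matching_eq_snd l r r' : (l, r) \in F -> (l, r') \in F -> r = r'.
Proof. by move=> h h'; case: (matchingF.2 _ _ h h' (or_introl erefl)). Qed.

Definition alt_edge (e e' : L * R) := (e'.1, e.2) \in F.

Definition alternating (p : seq (L * R)) : bool :=
  if p is e0 :: s then
    [&& uniq (map fst p), uniq (map snd p),
        all (fun e => adj e.1 e.2 && (e \notin F)) p,
        path alt_edge e0 s & ~~ matchedL F e0.1]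
  else false.

Lemma alternating_cons e0 s :
  alternating (e0 :: s) =
  [&& uniq (map fst (e0 :: s)), uniq (map snd (e0 :: s)),
      all (fun e => adj e.1 e.2 && (e \notin F)) (e0 :: s),
      path alt_edge e0 s & ~~ matchedL F e0.1].
Proof. by []. Qed.

Arguments alternating : simpl never.

(* [p] followed by the matching edge from its last R-vertex to [l]; the empty
   path leads exactly to the unmatched vertices. *)
Definition alt_path_to (l : L) (p : seq (L * R)) : bool :=
  if p is e0 :: s then alternating p && ((l, (last e0 s).2) \in F)
  else ~~ matchedL F l.

Lemma alt_path_to_rcons l p e :
  alt_path_to l (rcons p e) = alternating (rcons p e) && ((l, e.2) \in F).
Proof. by case: p => [|e0 s] //=; rewrite last_rcons. Qed.

Lemma alternating_augmenting p e :
  alternating (rcons p e) -> ~~ matchedR F e.2 -> augmenting_path adj F (rcons p e).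
Proof.
by case: p => [|e0 s] /and5P[*]; split; rewrite ?last_rcons.
Qed.

Lemma alternating_prefix e0 s1 s2 :
  alternating (e0 :: s1 ++ s2) -> alternating (e0 :: s1).
Proof.
rewrite /alternating -cat_cons !map_cat !cat_uniq all_cat cat_path.
by case/and5P=> /andP[-> _] /andP[-> _] /andP[-> _] /andP[-> _] ->.
Qed.

Lemma alt_edge_path_fst e0 s l :
  path alt_edge e0 s -> l \in map fst s ->
  exists2 r, r \in map snd (belast e0 s) & (l, r) \in F.
Proof.
elim: s e0 => [|e s IH] e0 //= /andP[he hs]; rewrite inE => /orP[/eqP->|].
  by exists e0.2; rewrite ?inE ?eqxx.
by case/(IH _ hs)=> r hr hlr; exists r; rewrite ?inE ?hr ?orbT.
Qed.

Lemma alt_edge_path_snd e0 s r :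
  path alt_edge e0 s -> r \in map snd (belast e0 s) ->
  exists s1 e s2, [/\ s = s1 ++ e :: s2, r = (last e0 s1).2 & (e.1, r) \in F].
Proof.
move=> hp /mapP[y /mem_belast_split[s1 [e [s2 [def_s ->]]]] ->].
exists s1, e, s2; split=> //.
by move: hp; rewrite def_s cat_path => /and3P[].
Qed.

Lemma alt_path_to_snd l p r :
  alt_path_to l p -> r \in map snd p ->
  exists l' p', [/\ (l', r) \in F, alt_path_to l' p' & size p' <= size p].
Proof.
case: p => [|e0 s] // /andP[halt hl].
rewrite [in X in X -> _]lastI map_rcons mem_rcons inE => /orP[/eqP->|hr].
  by exists l, (e0 :: s); rewrite /= halt hl.
have hpath : path alt_edge e0 s by case/and5P: halt.
have [s1 [e [s2 [def_s def_r he]]]] := alt_edge_path_snd hpath hr.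
exists e.1, (e0 :: s1); split=> //=.
  by rewrite -def_r he andbT; apply: alternating_prefix (e :: s2) _; rewrite -def_s.
by rewrite def_s size_cat ltnS leq_addr.
Qed.

Lemma alt_path_to_notin_fst l p : alt_path_to l p -> l \notin map fst p.
Proof.
case: p => [|e0 s] //= /andP[/and5P[_ uniq_snd _ hpath hm] hl].
rewrite inE negb_or; apply/andP; split.
  by apply: contraNneq hm => <-; apply/existsP; exists (last e0 s).2.
apply/negP => /(alt_edge_path_fst hpath)[r hr hlr].
have def_r := matching_eq_snd hlr hl.
by move: uniq_snd; rewrite lastI map_rcons rcons_uniq -def_r hr.
Qed.

Lemma alternating_rcons l r p :
  alt_path_to l p -> adj l r -> (l, r) \notin F -> r \notin map snd p ->
  alternating (rcons p (l, r)).
Proof.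
move=> hp hadj hlr hr; have hl := alt_path_to_notin_fst hp.
case: p hp hl hr => [|e0 s]; first by rewrite /alternating /= hadj hlr => ->.
case/andP=> /and5P[u1 u2 hall hpath hm] hlast hl hr.
rewrite rcons_cons alternating_cons -rcons_cons !map_rcons !rcons_uniq all_rcons.
by rewrite rcons_path hl hr u1 u2 hpath hm hall /= hadj hlr [alt_edge _ _]hlast.
Qed.

Lemma alt_path_to_step l r p :
  alt_path_to l p -> adj l r ->
  (exists l' p', [/\ (l', r) \in F, alt_path_to l' p' & size p' <= size p])
  \/ alternating (rcons p (l, r)).
Proof.
move=> hp hadj; case: (boolP (r \in map snd p)) => hr.
  by left; apply: alt_path_to_snd hp hr.
case: (boolP ((l, r) \in F)) => hlr; first by left; exists l, p.
by right; apply: alternating_rcons.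
Qed.

Definition partners (B : {set R}) : {set L} :=
  [set l | [exists r in B, (l, r) \in F]].

Lemma card_partners (B : {set R}) :
  {in B, forall r, matchedR F r} -> #|B| <= #|partners B|.
Proof.
move=> matchedB; have [_ injF] := matchingF.
pose E := [set e in F | e.2 \in B].
have -> : #|B| = #|[set e.2 | e in E]|.
  apply: eq_card => r; apply/idP/imsetP => [hr|[e]].
    by have /existsP[l hl] := matchedB r hr; exists (l, r); rewrite ?inE ?hl.
  by rewrite inE => /andP[_ ?] ->.
rewrite card_in_imset; last first.
  by move=> e e' /setIdP[he _] /setIdP[he' _] h; apply: injF he he' (or_intror h).
rewrite -(card_in_imset (f := fst)); last first.
  by move=> e e' /setIdP[he _] /setIdP[he' _] h; apply: injF he he' (or_introl h).
apply/subset_leq_card/fintype.subsetP=> _ /imsetP[e /setIdP[he hB] ->].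
by rewrite inE; apply/existsP; exists e.2; rewrite hB -surjective_pairing.
Qed.

Fixpoint alt_reach (l0 : L) (k : nat) : {set L} :=
  if k is k'.+1 then alt_reach l0 k' :|: partners (nbhd adj (alt_reach l0 k'))
  else [set l0].

Lemma alt_reach_root l0 k : l0 \in alt_reach l0 k.
Proof. by elim: k => [|k IH] /=; rewrite ?set11 ?inE ?IH. Qed.

Variable l0 : L.
Hypothesis l0_unmatched : ~~ matchedL F l0.

Lemma alt_reach_path_to k l :
  l \in alt_reach l0 k -> exists2 p, alt_path_to l p & size p <= k.
Proof.
elim: k l => [|k IH] l /=; first by rewrite inE => /eqP->; exists [::].
case/setUP=> [/IH[p hp hk]|]; first by exists p; rewrite // leqW.
rewrite inE => /exists_inP[r]; rewrite inE => /exists_inP[l' /IH[p hp hk] hadj] hlr.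
have [[l'' [p' [hl'' hp' hs]]]|halt] := alt_path_to_step hp hadj.
  exists p'; first by rewrite (matching_eq_fst hlr hl'').
  exact: leq_trans hs (leqW hk).
by exists (rcons p (l', r)); rewrite ?alt_path_to_rcons ?halt ?size_rcons.
Qed.

Lemma augmenting_of_unmatched_nbhd k r :
  r \in nbhd adj (alt_reach l0 k) -> ~~ matchedR F r ->
  exists p, augmenting_path adj F p /\ size p <= k.+1.
Proof.
rewrite inE => /exists_inP[l /alt_reach_path_to[p hp hk] hadj] hr.
have [[l' [p' [hl' _ _]]]|halt] := alt_path_to_step hp hadj.
  by case/negP: hr; apply/existsP; exists l'.
by exists (rcons p (l, r)); rewrite size_rcons; split=> //; apply: alternating_augmenting.
Qed.

Lemma alt_reach_grows k :
  ~ (exists p, augmenting_path adj F p /\ size p <= k.+1) ->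
  #|nbhd adj (alt_reach l0 k)| < #|alt_reach l0 k.+1|.
Proof.
move=> noaug; set B := nbhd adj _.
have matchedB : {in B, forall r, matchedR F r}.
  move=> r hr; apply: contraT => /(augmenting_of_unmatched_nbhd hr) aug.
  by case: (noaug aug).
have l0_partners : l0 \notin partners B.
  by rewrite inE; apply: contra l0_unmatched => /exists_inP[r _ h]; apply/existsP; exists r.
apply: leq_ltn_trans (card_partners matchedB) _.
apply: (@leq_trans #|l0 |: partners B|); first by rewrite cardsU1 l0_partners.
by apply/subset_leq_card/finset.setSU; rewrite finset.sub1set alt_reach_root.
Qed.

Local Open Scope ring_scope.

Variables (K : numDomainType) (alpha : K).
Hypothesis alpha_ge1 : 1 <= alpha.
Hypothesis expansion : forall A : {set L}, alpha * #|A|%:R <= #|nbhd adj A|%:R.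

Lemma augmenting_or_alt_reach_ge k :
  (exists p, augmenting_path adj F p /\ (size p <= k)%N) \/
  alpha ^+ k <= #|alt_reach l0 k|%:R.
Proof.
elim: k => [|k [[p [hp hs]]|IH]].
- by right; rewrite expr0 /= cards1.
- by left; exists p; rewrite leqW.
have [aug|noaug] := EM (exists p, augmenting_path adj F p /\ (size p <= k.+1)%N).
  by left.
right; rewrite exprS; apply: le_trans (ler_wpM2l _ IH) _.
  exact: le_trans alpha_ge1.
by apply: le_trans (expansion _) _; rewrite ler_nat ltnW // alt_reach_grows.
Qed.

End AlternatingPaths.

Local Open Scope ring_scope.

Lemma ltr_expn_floor_log (K : realType) (alpha x : K) : 1 < alpha -> 1 <= x ->
  exists n : nat, Num.floor (ln x / ln alpha) = n%:Z /\ x < alpha ^+ n.+1.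
Proof.
move=> alpha_gt1 x_ge1; have alpha_gt0 : 0 < alpha := lt_trans ltr01 alpha_gt1.
have lnalpha_gt0 : 0 < ln alpha := ln_gt0 alpha_gt1.
have : 0 <= Num.floor (ln x / ln alpha).
  by rewrite floor_ge0 divr_ge0 // ?ln_ge0 // ltW.
case: (Num.floor _) (floorD1_gt (ln x / ln alpha)) => [n|//] hlt _.
exists n; split=> //.
rewrite -ltr_ln ?posrE ?exprn_gt0 //; last exact: lt_le_trans ltr01 x_ge1.
by move: hlt; rewrite lnXn // -PoszD addn1 ltr_pdivrMr // mulrC mulrzr.
Qed.

Theorem lemma6 (RR : realType) (L R : finType) (adj : L -> R -> bool)
    (alpha : RR) (halpha : 1 < alpha)
    (hexp : forall A : {set L}, alpha * (#|A|%:R) <= (#|nbhd adj A|%:R))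
    (F : {set L * R}) (hF : is_matching adj F)
    (hunm : exists l : L, ~~ matchedL F l) :
  exists p : seq (L * R), augmenting_path adj F p /\
    ((path_length p)%:Z <= 2 * (Num.floor (ln (#|L|%:R : RR) / ln alpha) + 1) + 1)%R.
Proof.
have [l0 l0_unmatched] := hunm.
have L_ge1 : 1 <= #|L|%:R :> RR by rewrite ler1n; apply/card_gt0P; exists l0.
have [n [-> L_lt]] := ltr_expn_floor_log halpha L_ge1.
have [[p [hp hsize]]|] := augmenting_or_alt_reach_ge hF l0_unmatched (ltW halpha) hexp n.+1.
  by exists p; split=> //; rewrite /path_length; lia.
by rewrite leNgt (le_lt_trans _ L_lt) // ler_nat max_card.
Qed.
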